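(* The distribution $p\in\Delta_7$ with $p_{001}=p_{010}=p_{100}=\tfrac13$ and all other entries $0$ lies in $\mathcal{M}_{3,3}$ and in the closure $\overline{\operatorname{RBM}_{3,2}}$, but not in $\operatorname{RBM}_{3,2}$. In particular $\operatorname{RBM}_{3,2}$ is not a closed subset of $\Delta_7$.
   Context: A distribution of three binary random variables is a $2\times2\times2$ tensor $p=(p_{ijk})_{i,j,k\in\{0,1\}}$ with nonnegative entries summing to $1$; the set of these is $\Delta_7$. For $a,b,c\in\mathbb{R}^2_{\ge0}$, $a\otimes b\otimes c$ is the tensor with entries $a_ib_jc_k$. $\mathcal{M}_{3,3}$ is the set of $p\in\Delta_7$ that are a sum of three tensors of the form $a\otimes b\otimes c$ with $a,b,c\in\mathbb{R}^2_{\ge0}$. $\operatorname{RBM}_{3,2}$ is the set of $p\in\Delta_7$ of the form $p=(a_1\otimes b_1\otimes c_1+d_1\otimes e_1\otimes f_1)*(a_2\otimes b_2\otimes c_2+d_2\otimes e_2\otimes f_2)$ with all vectors in $\mathbb{R}^2_{\ge0}$, where $*$ is the entrywise (Hadamard) product. *)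

From Stdlib Require Import Reals.
Open Scope R_scope.

(* Index set {0,1} is encoded by bool, with false = 0 and true = 1. *)
Definition vec2 := bool -> R.
Definition nonneg2 (a : vec2) : Prop := forall i, 0 <= a i.

Definition tensor := bool -> bool -> bool -> R.

Definition outer3 (a b c : vec2) : tensor := fun i j k => a i * b j * c k.

Definition tsum (p : tensor) : R :=
  p false false false + p false false true + p false true false + p false true true +
  p true false false + p true false true + p true true false + p true true true.

Definition Delta7 (p : tensor) : Prop :=
  (forall i j k, 0 <= p i j k) /\ tsum p = 1.

Definition M33 (p : tensor) : Prop :=
  Delta7 p /\
  exists a1 b1 c1 a2 b2 c2 a3 b3 c3 : vec2,
    nonneg2 a1 /\ nonneg2 b1 /\ nonneg2 c1 /\
    nonneg2 a2 /\ nonneg2 b2 /\ nonneg2 c2 /\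
    nonneg2 a3 /\ nonneg2 b3 /\ nonneg2 c3 /\
    forall i j k, p i j k = outer3 a1 b1 c1 i j k + outer3 a2 b2 c2 i j k
                            + outer3 a3 b3 c3 i j k.

Definition RBM32 (p : tensor) : Prop :=
  Delta7 p /\
  exists a1 b1 c1 d1 e1 f1 a2 b2 c2 d2 e2 f2 : vec2,
    nonneg2 a1 /\ nonneg2 b1 /\ nonneg2 c1 /\
    nonneg2 d1 /\ nonneg2 e1 /\ nonneg2 f1 /\
    nonneg2 a2 /\ nonneg2 b2 /\ nonneg2 c2 /\
    nonneg2 d2 /\ nonneg2 e2 /\ nonneg2 f2 /\
    forall i j k, p i j k =
      (outer3 a1 b1 c1 i j k + outer3 d1 e1 f1 i j k) *
      (outer3 a2 b2 c2 i j k + outer3 d2 e2 f2 i j k).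

(* Topological closure in R^8 (= R^{2x2x2}) with its standard topology,
   expressed via the (equivalent) sup-norm metric. *)
Definition closure (S : tensor -> Prop) (p : tensor) : Prop :=
  forall eps, 0 < eps ->
    exists q, S q /\ forall i j k, Rabs (p i j k - q i j k) < eps.

Definition is_closed (S : tensor -> Prop) : Prop :=
  forall p, closure S p -> S p.

Definition p_ex : tensor := fun i j k =>
  match i, j, k with
  | false, false, true => 1/3
  | false, true, false => 1/3
  | true, false, false => 1/3
  | _, _, _ => 0
  end.

(* Inside RBM_{3,2} each Hadamard factor is a sum of two nonnegative rank-one
   tensors.  If such a sum is positive at 001, 010 and 100, two of these three
   entries are carried by the same rank-one term a (x) b (x) c, which forces
   a_0, b_0, c_0 > 0 and hence a positive entry at 000.  So every element of
   RBM_{3,2} positive at 001, 010, 100 is positive at 000, which excludes p.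
   On the other hand p is a limit of the explicit RBM distributions
   (s e_0 (x) 1 (x) 1 + t e_1 (x) e_0 (x) e_0)
     * (1 (x) (1,d) (x) (d,1) + 1 (x) (d,1) (x) (1,d)),
   normalized with 2 t d = (1 + d^2) s, as d -> 0. *)

From Stdlib Require Import Reals Lra Psatz.
Open Scope R_scope.

Definition v2 (x0 x1 : R) : vec2 := fun b => if b then x1 else x0.

Lemma nonneg2_v2 x0 x1 : 0 <= x0 -> 0 <= x1 -> nonneg2 (v2 x0 x1).
Proof. now intros ? ? []. Qed.

Definition rank2 (a b c d e f : vec2) : tensor :=
  fun i j k => outer3 a b c i j k + outer3 d e f i j k.

Lemma Rmult_pos_inv x y : 0 <= x -> 0 <= y -> 0 < x * y -> 0 < x /\ 0 < y.
Proof.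
  intros hx hy hxy.
  destruct (Rle_lt_or_eq_dec 0 x hx) as [?|<-]; [|lra].
  destruct (Rle_lt_or_eq_dec 0 y hy) as [?|<-]; [|lra].
  now split.
Qed.

Lemma Rplus_pos_inv x y : 0 <= x -> 0 <= y -> 0 < x + y -> 0 < x \/ 0 < y.
Proof. intros; destruct (Rle_lt_or_eq_dec 0 x); [assumption | now left | right; lra]. Qed.

Section RankOne.

Variables a b c : vec2.
Hypotheses (ha : nonneg2 a) (hb : nonneg2 b) (hc : nonneg2 c).

Lemma outer3_nonneg i j k : 0 <= outer3 a b c i j k.
Proof. unfold outer3; repeat apply Rmult_le_pos; auto. Qed.

Lemma outer3_pos_inv i j k :
  0 < outer3 a b c i j k -> 0 < a i /\ 0 < b j /\ 0 < c k.
Proof.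
  intros h; unfold outer3 in h.
  destruct (Rmult_pos_inv _ _ (Rmult_le_pos _ _ (ha i) (hb j)) (hc k) h) as [hab hk].
  destruct (Rmult_pos_inv _ _ (ha i) (hb j) hab).
  auto.
Qed.

Lemma outer3_pos_000_of_two :
  (0 < outer3 a b c false false true /\ 0 < outer3 a b c false true false) \/
  (0 < outer3 a b c false false true /\ 0 < outer3 a b c true false false) \/
  (0 < outer3 a b c false true false /\ 0 < outer3 a b c true false false) ->
  0 < outer3 a b c false false false.
Proof.
  intros h; unfold outer3.
  destruct h as [[h1 h2] | [[h1 h2] | [h1 h2]]];
    apply outer3_pos_inv in h1 as (? & ? & ?);
    apply outer3_pos_inv in h2 as (? & ? & ?);
    repeat apply Rmult_lt_0_compat; assumption.
Qed.

End RankOne.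

Section RankTwo.

Variables a b c d e f : vec2.
Hypotheses (ha : nonneg2 a) (hb : nonneg2 b) (hc : nonneg2 c)
           (hd : nonneg2 d) (he : nonneg2 e) (hf : nonneg2 f).

Lemma rank2_nonneg i j k : 0 <= rank2 a b c d e f i j k.
Proof. apply Rplus_le_le_0_compat; apply outer3_nonneg; auto. Qed.

Lemma rank2_pos_000 :
  0 < rank2 a b c d e f false false true ->
  0 < rank2 a b c d e f false true false ->
  0 < rank2 a b c d e f true false false ->
  0 < rank2 a b c d e f false false false.
Proof.
  unfold rank2.
  pose proof (outer3_nonneg a b c ha hb hc) as habc.
  pose proof (outer3_nonneg d e f hd he hf) as hdef.
  intros h1 h2 h3.
  apply Rplus_pos_inv in h1, h2, h3; auto.
  destruct h1, h2, h3;
    solve [ apply Rplus_lt_le_0_compat; [apply outer3_pos_000_of_two; tauto | auto]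
          | apply Rplus_le_lt_0_compat; [auto | apply outer3_pos_000_of_two; tauto] ].
Qed.

End RankTwo.

Lemma RBM32_pos_000 q : RBM32 q ->
  0 < q false false true -> 0 < q false true false -> 0 < q true false false ->
  0 < q false false false.
Proof.
  intros [_ (a1 & b1 & c1 & d1 & e1 & f1 & a2 & b2 & c2 & d2 & e2 & f2 &
             ha1 & hb1 & hc1 & hd1 & he1 & hf1 & ha2 & hb2 & hc2 & hd2 & he2 & hf2 & hq)].
  change (forall i j k, q i j k =
            rank2 a1 b1 c1 d1 e1 f1 i j k * rank2 a2 b2 c2 d2 e2 f2 i j k) in hq.
  rewrite !hq.
  pose proof (rank2_nonneg a1 b1 c1 d1 e1 f1 ha1 hb1 hc1 hd1 he1 hf1) as h1.
  pose proof (rank2_nonneg a2 b2 c2 d2 e2 f2 ha2 hb2 hc2 hd2 he2 hf2) as h2.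
  intros q1 q2 q3.
  apply Rmult_pos_inv in q1 as [], q2 as [], q3 as []; auto.
  apply Rmult_lt_0_compat; apply rank2_pos_000; auto.
Qed.

Lemma not_RBM32_p_ex : ~ RBM32 p_ex.
Proof.
  intros h.
  pose proof (RBM32_pos_000 p_ex h) as h0; simpl in h0.
  enough (0 < 0) by lra.
  apply h0; lra.
Qed.

Lemma RBM32_intro (a1 b1 c1 d1 e1 f1 a2 b2 c2 d2 e2 f2 : vec2) :
  nonneg2 a1 -> nonneg2 b1 -> nonneg2 c1 -> nonneg2 d1 -> nonneg2 e1 -> nonneg2 f1 ->
  nonneg2 a2 -> nonneg2 b2 -> nonneg2 c2 -> nonneg2 d2 -> nonneg2 e2 -> nonneg2 f2 ->
  let q := fun i j k => rank2 a1 b1 c1 d1 e1 f1 i j k * rank2 a2 b2 c2 d2 e2 f2 i j k in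
  tsum q = 1 -> RBM32 q.
Proof.
  intros; split.
  - split; [|assumption].
    intros; apply Rmult_le_pos; apply rank2_nonneg; assumption.
  - exists a1, b1, c1, d1, e1, f1, a2, b2, c2, d2, e2, f2; tauto.
Qed.

Section Approximation.

Variable d : R.
Hypothesis hd : 0 < d.

Let N := 3 * (1 + d ^ 2) + 4 * d.
Let s := / N.
Let t := (1 + d ^ 2) * s / (2 * d).

Definition rbm_approx : tensor := fun i j k =>
  rank2 (v2 s 0) (v2 1 1) (v2 1 1) (v2 0 t) (v2 1 0) (v2 1 0) i j k *
  rank2 (v2 1 1) (v2 1 d) (v2 d 1) (v2 1 1) (v2 d 1) (v2 1 d) i j k.

Lemma N_pos : 0 < N.
Proof. unfold N; nra. Qed.

Lemma N_s : N * s = 1.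
Proof. unfold s; field; apply Rgt_not_eq, N_pos. Qed.

Lemma s_pos : 0 < s.
Proof. apply Rinv_0_lt_compat, N_pos. Qed.

Lemma t_balance : 2 * d * t = (1 + d ^ 2) * s.
Proof. unfold t; field; lra. Qed.

Lemma t_pos : 0 < t.
Proof. unfold t; pose proof s_pos; apply Rdiv_lt_0_compat; nra. Qed.

Lemma RBM32_rbm_approx : RBM32 rbm_approx.
Proof.
  pose proof s_pos; pose proof t_pos.
  apply RBM32_intro; try (apply nonneg2_v2; lra).
  unfold tsum, rank2, outer3; simpl.
  pose proof N_s; pose proof t_balance.
  unfold N in *; clearbody s t; nra.
Qed.

Lemma rbm_approx_close i j k : Rabs (p_ex i j k - rbm_approx i j k) < d.
Proof.
  pose proof N_s; pose proof s_pos; pose proof t_balance.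
  unfold N in *; clearbody s t.
  destruct i, j, k; unfold rbm_approx, rank2, outer3; simpl;
    apply Rabs_def1; nra.
Qed.

End Approximation.

Lemma closure_RBM32_p_ex : closure RBM32 p_ex.
Proof.
  intros eps heps; exists (rbm_approx eps); split.
  - now apply RBM32_rbm_approx.
  - now apply rbm_approx_close.
Qed.

Lemma Delta7_p_ex : Delta7 p_ex.
Proof. split; [intros [] [] []; simpl; lra | unfold tsum; simpl; lra]. Qed.

Lemma M33_p_ex : M33 p_ex.
Proof.
  split; [exact Delta7_p_ex |].
  exists (v2 0 (1/3)), (v2 1 0), (v2 1 0),
         (v2 (1/3) 0), (v2 0 1), (v2 1 0),
         (v2 (1/3) 0), (v2 1 0), (v2 0 1).
  repeat split; try (apply nonneg2_v2; lra).
  intros [] [] []; unfold outer3; simpl; lra.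
Qed.

Theorem mainTheorem9 :
  Delta7 p_ex /\ M33 p_ex /\ closure RBM32 p_ex /\ ~ RBM32 p_ex /\ ~ is_closed RBM32.
Proof.
  refine (conj Delta7_p_ex (conj M33_p_ex (conj closure_RBM32_p_ex (conj not_RBM32_p_ex _)))).
  intros hclosed.
  exact (not_RBM32_p_ex (hclosed p_ex closure_RBM32_p_ex)).
Qed.
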